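(* Let $J$ be a locally profinite group and $J^1$ a compact normal subgroup. Let $A$ be a finite length local $W(\overline{\mathbb{F}}_l)$-algebra with residue field $\overline{\mathbb{F}}_l$, and let $\eta_A$ be a finite-dimensional representation of $J^1$ over $A$ such that $\eta_A\otimes_A\overline{\mathbb{F}}_l$ is irreducible. Suppose $\eta_A$ extends to an $A$-representation $\Lambda_A$ of $J$. Then any other extension $\Lambda'_A$ of $\eta_A$ to a representation of $J$ is isomorphic to the twist of $\Lambda_A$ by a character of $J/J^1$ (with values in $A^\times$). *)

From HB Require Import structures.
From mathcomp Require Import all_boot all_order all_algebra.
From mathcomp Require Import all_classical all_reals all_analysis.
Set Implicit Arguments. Unset Strict Implicit. Unset Printing Implicit Defensive.
Import Order.TTheory GRing.Theory Num.Theory.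
Local Open Scope classical_set_scope.
Local Open Scope ring_scope.

Section TopGroups.
Variables (T : topologicalType) (mul : T -> T -> T) (inv : T -> T) (one : T).

Definition is_group : Prop :=
  [/\ forall x y z, mul x (mul y z) = mul (mul x y) z,
      forall x, mul one x = x /\ mul x one = x &
      forall x, mul (inv x) x = one /\ mul x (inv x) = one].

Definition is_subgroup (H : set T) : Prop :=
  [/\ H one, forall x y, H x -> H y -> H (mul x y) & forall x, H x -> H (inv x)].

Definition is_normal_subgroup (H : set T) : Prop :=
  is_subgroup H /\ forall g h, H h -> H (mul (mul g h) (inv g)).

Definition locally_profinite_group : Prop :=
  [/\ is_group,
      continuous (fun p : T * T => mul p.1 p.2),
      continuous inv,
      hausdorff_space T &
      forall U : set T, nbhs one U ->
        exists K : set T, [/\ K `<=` U, is_subgroup K, open K & compact K]].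

Definition is_rep_on (A : pzRingType) (n : nat) (H : set T) (rho : T -> 'M[A]_n)
  : Prop :=
  rho one = 1%:M /\ forall g h, H g -> H h -> rho (mul g h) = rho g *m rho h.

Definition smooth_on (V : Type) (H : set T) (rho : T -> V) : Prop :=
  exists U : set T, [/\ open U, U one & forall h, H h -> U h -> rho h = rho one].

Definition irreducible_on (k : fieldType) (n : nat) (H : set T)
  (rho : T -> 'M[k]_n) : Prop :=
  (0 < n)%N /\
  forall U : 'M[k]_n, (forall h, H h -> stablemx U (rho h)) ->
     (U == (0 : 'M[k]_n))%MS \/ row_full U.

(* smooth A^x-valued character of T trivial on H, i.e. of T/H *)
Definition is_character_mod (A : comUnitRingType) (H : set T) (chi : T -> A) : Prop :=
  [/\ chi one = 1,
      forall g h, chi (mul g h) = chi g * chi h,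
      forall g, chi g \is a GRing.unit,
      forall h, H h -> chi h = 1 &
      smooth_on setT chi].

End TopGroups.

Definition is_ideal (A : comPzRingType) (I : set A) : Prop :=
  [/\ I 0, forall x y, I x -> I y -> I (x + y) & forall a x, I x -> I (a * x)].

Definition finite_length (A : comPzRingType) : Prop :=
  exists (r : nat) (I : nat -> set A),
    [/\ I 0%N = setT, I r = [set 0],
        forall i, (i <= r)%N -> is_ideal (I i) &
        forall i, (i < r)%N ->
          [/\ I i.+1 `<=` I i, I i.+1 != I i &
              forall J, is_ideal J -> I i.+1 `<=` J -> J `<=` I i ->
                J = I i.+1 \/ J = I i]].

Definition is_algebraic_closure_of_Fp (k : closedFieldType) (l : nat) : Prop :=
  [/\ prime l, (l \in [pchar k])%N &
      forall x : k, exists p : {poly k},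
        [/\ p != 0, forall i, exists m : nat, p`_i = m%:R & root p x]].

(* A is local with residue map pi : A -> k (kernel = non-units = maximal ideal) *)
Definition local_with_residue (A : comUnitRingType) (k : fieldType)
  (pi : {rmorphism A -> k}) : Prop :=
  (forall y : k, exists a : A, pi a = y) /\
  forall a : A, (a \is a GRing.unit) = (pi a != 0).

From HB Require Import structures.
From mathcomp Require Import all_boot all_order all_algebra.
From mathcomp Require Import all_classical all_reals all_analysis.
From mathcomp Require Import ring.
Set Implicit Arguments. Unset Strict Implicit. Unset Printing Implicit Defensive.
Import Order.TTheory GRing.Theory Num.Theory.
Local Open Scope classical_set_scope.
Local Open Scope ring_scope.

(* Conjugating [eta] by [Lam g] or by [Lam' g] gives [eta] composed with conjugation
   by [g], so the intertwiner [Lam g^-1 * Lam' g] commutes with [eta(J1)].  Modulo the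
   maximal ideal this commutant is scalar by Schur's lemma, and climbing a composition
   series of [A], whose layers are copies of the residue field, lifts scalarity to [A]
   one layer at a time.  The scalar [chi g] then satisfies [Lam' = chi *: Lam], which
   forces [chi] to be a smooth character trivial on [J1]. *)

Section Ideals.
Variables (A : comPzRingType) (I : set A).
Hypothesis idealI : is_ideal I.

Lemma ideal0 : I 0. Proof. by case: idealI. Qed.

Lemma idealD x y : I x -> I y -> I (x + y). Proof. by case: idealI => _ + _; apply. Qed.

Lemma idealMl a x : I x -> I (a * x). Proof. by case: idealI => _ _; apply. Qed.

Lemma idealMr a x : I x -> I (x * a). Proof. by rewrite mulrC; apply: idealMl. Qed.

Lemma idealN x : I x -> I (- x). Proof. by rewrite -mulN1r; apply: idealMl. Qed.

Lemma ideal_sum (J : Type) (r : seq J) (P : pred J) (F : J -> A) :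
  (forall j, P j -> I (F j)) -> I (\sum_(j <- r | P j) F j).
Proof. by move=> IF; elim/big_ind: _ => //; [apply: ideal0 | apply: idealD]. Qed.

Definition ideal_adjoin (w : A) : set A := [set y | exists b, I (y - b * w)].

Lemma ideal_adjoin_ideal w : is_ideal (ideal_adjoin w).
Proof.
split.
- by exists 0; rewrite mul0r subr0; apply: ideal0.
- move=> y y' [b Ib] [b' Ib']; exists (b + b').
  have -> : y + y' - (b + b') * w = (y - b * w) + (y' - b' * w) by ring.
  exact: idealD.
- move=> c y [b Ib]; exists (c * b).
  have -> : c * y - c * b * w = c * (y - b * w) by ring.
  exact: idealMl.
Qed.

Lemma sub_ideal_adjoin w : I `<=` ideal_adjoin w.
Proof. by move=> y Iy; exists 0; rewrite mul0r subr0. Qed.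

Lemma ideal_adjoin_mem w : ideal_adjoin w w.
Proof. by exists 1; rewrite mul1r subrr; apply: ideal0. Qed.

Lemma ideal_adjoin_sub (I' : set A) w :
  is_ideal I' -> I `<=` I' -> I' w -> ideal_adjoin w `<=` I'.
Proof.
move=> idealI' sII' I'w y [b Ib].
have -> : y = (y - b * w) + b * w by ring.
by case: idealI' => _ I'D I'M; apply: I'D; [apply: sII' | apply: I'M].
Qed.

End Ideals.

Definition mx_in_ideal (A : comPzRingType) (m n : nat) (I : set A) (Z : 'M[A]_(m, n)) :=
  forall i j, I (Z i j).

Section MatricesOverIdeals.
Variables (A : comPzRingType) (I : set A).
Hypothesis idealI : is_ideal I.

Lemma mx_in_idealD m n (Z1 Z2 : 'M[A]_(m, n)) :
  mx_in_ideal I Z1 -> mx_in_ideal I Z2 -> mx_in_ideal I (Z1 + Z2).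
Proof. by move=> IZ1 IZ2 i j; rewrite mxE; apply: idealD. Qed.

Lemma mx_in_idealN m n (Z : 'M[A]_(m, n)) : mx_in_ideal I Z -> mx_in_ideal I (- Z).
Proof. by move=> IZ i j; rewrite mxE; apply: idealN. Qed.

Lemma mx_in_idealMl m n p (Z : 'M[A]_(m, n)) (B : 'M[A]_(n, p)) :
  mx_in_ideal I Z -> mx_in_ideal I (Z *m B).
Proof. by move=> IZ i j; rewrite mxE; apply: ideal_sum => // l _; apply: idealMr. Qed.

Lemma mx_in_idealMr m n p (B : 'M[A]_(m, n)) (Z : 'M[A]_(n, p)) :
  mx_in_ideal I Z -> mx_in_ideal I (B *m Z).
Proof. by move=> IZ i j; rewrite mxE; apply: ideal_sum => // l _; apply: idealMl. Qed.

End MatricesOverIdeals.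

Section CompositionStep.
Variables (A : comUnitRingType) (k : fieldType) (pi : {rmorphism A -> k}).
Hypothesis pi_unit : forall a : A, (a \is a GRing.unit) = (pi a != 0).
Variables (I0 I1 : set A) (x : A).
Hypotheses (idealI0 : is_ideal I0) (idealI1 : is_ideal I1) (subI : I1 `<=` I0).
Hypothesis simple_quotient : forall J, is_ideal J -> I1 `<=` J -> J `<=` I0 ->
  J = I1 \/ J = I0.
Hypotheses (I0x : I0 x) (I1Nx : ~ I1 x).

Lemma ideal_adjoin_between w : I0 w -> ideal_adjoin I1 w = I1 \/ ideal_adjoin I1 w = I0.
Proof.
move=> I0w; apply: simple_quotient; first exact: ideal_adjoin_ideal.
  exact: sub_ideal_adjoin.
exact: ideal_adjoin_sub.
Qed.

Lemma step_generator y : I0 y -> exists b, I1 (y - b * x).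
Proof.
have [adjI1|<- //] := ideal_adjoin_between I0x.
by case: I1Nx; rewrite -adjI1; apply: ideal_adjoin_mem.
Qed.

(* [I0 / I1] is simple and generated by [x], so [c |-> c x] identifies it with the residue field. *)
Lemma step_annihilator c : I1 (c * x) <-> pi c = 0.
Proof.
split=> [I1cx | pic0].
  apply/eqP; apply: contrapT => /negP; rewrite -pi_unit => cU.
  by apply: I1Nx; rewrite -(mulKr cU x); apply: (idealMl idealI1).
have [<-|adjI0] := ideal_adjoin_between (idealMl idealI0 c I0x).
  exact: ideal_adjoin_mem.
case: I1Nx; move: I0x; rewrite -adjI0 => -[b I1xbcx].
have uU : (1 - b * c) \is a GRing.unit.
  by rewrite pi_unit rmorphB rmorph1 rmorphM pic0 mulr0 subr0 oner_neq0.
rewrite -(mulKr uU x); apply: (idealMl idealI1).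
by rewrite mulrBl mul1r -mulrA.
Qed.

Lemma mx_step_decomp m n (N : 'M[A]_(m, n)) :
  mx_in_ideal I0 N -> exists C, mx_in_ideal I1 (N - x *: C).
Proof.
move=> I0N; have /choice [f I1f] : forall ij : 'I_m * 'I_n,
    exists b, I1 (N ij.1 ij.2 - b * x) by move=> [i j]; apply: step_generator.
by exists (\matrix_(i, j) f (i, j)) => i j; rewrite !mxE mulrC; exact: (I1f (i, j)).
Qed.

Lemma mx_step_annihilator m n (C : 'M[A]_(m, n)) :
  mx_in_ideal I1 (x *: C) <-> map_mx pi C = 0.
Proof.
split=> [I1xC | piC0 i j].
  apply/matrixP => i j; rewrite !mxE; apply/step_annihilator.
  by have := I1xC i j; rewrite mxE mulrC.
rewrite mxE mulrC; apply/step_annihilator.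
by move/matrixP/(_ i j): piC0; rewrite !mxE.
Qed.

Hypothesis pi_surj : forall y : k, exists a, pi a = y.
Variables (n : nat) (S : set 'M[A]_n).
Hypothesis residue_commutant_scalar : forall C : 'M[k]_n,
  (forall s, S s -> comm_mx C (map_mx pi s)) -> exists lam, C = lam%:M.

(* Write [M - a = Z + x C] with [Z] over [I1]: commuting with [S] then forces [C] to
   commute with [S] modulo the maximal ideal, so [C] is a scalar [c0] there and
   [M - (a + x c0)] lies over [I1]. *)
Lemma commutant_step M a : (forall s, S s -> comm_mx M s) ->
  mx_in_ideal I0 (M - a%:M) -> exists a', mx_in_ideal I1 (M - a'%:M).
Proof.
move=> cMS /mx_step_decomp [C I1Z]; set Z := _ - x *: C in I1Z.
have cCS s : S s -> comm_mx (map_mx pi C) (map_mx pi s).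
  move=> Ss; apply/eqP; rewrite -subr_eq0 -!map_mxM -map_mxB; apply/eqP.
  apply/mx_step_annihilator.
  have -> : x *: (C *m s - s *m C) = s *m Z - Z *m s.
    rewrite /Z !(mulmxBl, mulmxBr) -scalemxAl -scalemxAr cMS // scalar_mxC.
    by rewrite opprB [RHS]addrC addrA subrK scalerBr.
  apply: mx_in_idealD => //; first exact: mx_in_idealMr.
  by apply: mx_in_idealN => //; apply: mx_in_idealMl.
have [lam Clam] := residue_commutant_scalar cCS.
have [c0 pic0] := pi_surj lam.
exists (a + x * c0).
have -> : M - (a + x * c0)%:M = Z + x *: (C - c0%:M).
  by rewrite /Z scalerBr scale_scalar_mx addrA subrK -addrA -opprD -raddfD.
apply: mx_in_idealD => //; apply/mx_step_annihilator.
by rewrite map_mxB Clam map_scalar_mx pic0 subrr.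
Qed.

End CompositionStep.

Lemma commutant_lift_scalar (A : comUnitRingType) (k : fieldType)
    (pi : {rmorphism A -> k}) (n : nat) (S : set 'M[A]_n) :
  local_with_residue pi -> finite_length A ->
  (forall C : 'M[k]_n, (forall s, S s -> comm_mx C (map_mx pi s)) ->
     exists lam, C = lam%:M) ->
  forall M, (forall s, S s -> comm_mx M s) -> exists a, M = a%:M.
Proof.
move=> [pi_surj pi_unit] [r [I [I0 Ir idealI Istep]]] residue_scalar M cMS.
suff /(_ r (leqnn r)) [a] : forall i, (i <= r)%N -> exists a, mx_in_ideal (I i) (M - a%:M).
  rewrite Ir => Ma0; exists a; apply/eqP; rewrite -subr_eq0; apply/eqP/matrixP => i j.
  by rewrite (Ma0 i j) mxE.
elim=> [|i IH] lt_ir; first by exists 0 => p q; rewrite I0.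
have [subI neqI simple_quotient] := Istep i lt_ir.
have [x [Iix Ii1Nx]] : exists x, I i x /\ ~ I i.+1 x.
  apply: contrapT => noX; move/eqP: neqI; apply; apply/seteqP; split=> // y Iy.
  by apply: contrapT => Ii1Ny; apply: noX; exists y.
have [a Ma] := IH (ltnW lt_ir).
exact: (commutant_step pi_unit (idealI _ (ltnW lt_ir)) (idealI _ lt_ir) subI
  simple_quotient Iix Ii1Nx pi_surj residue_scalar cMS Ma).
Qed.

Lemma irreducible_commutant_scalar (T : topologicalType) (k : closedFieldType)
    (n : nat) (H : set T) (rho : T -> 'M[k]_n) :
  irreducible_on H rho ->
  forall C : 'M[k]_n, (forall h, H h -> comm_mx C (rho h)) -> exists lam, C = lam%:M.
Proof.
move=> [n_gt0 irr] C cC.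
have [lam] : exists lam, root (char_poly C) lam.
  by apply/closed_rootP; rewrite size_char_poly; case: n n_gt0 {irr rho C cC}.
rewrite -eigenvalue_root_char => lam_eig; exists lam.
have [eig0|] := irr _ (fun h Hh => comm_mx_stable_eigenspace lam (cC h Hh)).
  by move/eqmx0P: eig0 lam_eig; rewrite /eigenvalue => ->; rewrite eqxx.
by rewrite -sub1mx => /sub_kermxP; rewrite mul1mx => /eqP; rewrite subr_eq0 => /eqP.
Qed.

Lemma scalemx_rinv_inj (R : comPzRingType) (n : nat) (L L' : 'M[R]_n) (c d : R) :
  (0 < n)%N -> L *m L' = 1%:M -> c *: L = d *: L -> c = d.
Proof.
move=> n_gt0 LL' /(congr1 (mulmx^~ L')); rewrite -!scalemxAl LL' !scalemx1.
by move/matrixP/(_ (Ordinal n_gt0) (Ordinal n_gt0)); rewrite !mxE eqxx !mulr1n.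
Qed.

Section Extensions.
Variables (T : topologicalType) (mul : T -> T -> T) (inv : T -> T) (one : T).
Hypothesis groupT : is_group mul inv one.
Variables (A : comUnitRingType) (n : nat).

Lemma rep_invl (L : T -> 'M[A]_n) g :
  is_rep_on mul one setT L -> L (inv g) *m L g = 1%:M.
Proof. by case: groupT => _ _ invT [L1 LM]; rewrite -LM // (invT g).1. Qed.

Lemma rep_invr (L : T -> 'M[A]_n) g :
  is_rep_on mul one setT L -> L g *m L (inv g) = 1%:M.
Proof. by case: groupT => _ _ invT [L1 LM]; rewrite -LM // (invT g).2. Qed.

Variables (H : set T) (eta Lam Lam' : T -> 'M[A]_n).
Hypothesis normalH : is_normal_subgroup mul inv one H.
Hypotheses (repLam : is_rep_on mul one setT Lam) (repLam' : is_rep_on mul one setT Lam').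
Hypotheses (Lam_eta : forall h, H h -> Lam h = eta h)
  (Lam'_eta : forall h, H h -> Lam' h = eta h).

Lemma extension_conj (L : T -> 'M[A]_n) g h :
  is_rep_on mul one setT L -> (forall h, H h -> L h = eta h) -> H h ->
  L g *m eta h *m L (inv g) = eta (mul (mul g h) (inv g)).
Proof.
move=> [_ LM] L_eta Hh; have [_ conjH] := normalH.
by rewrite -(L_eta _ (conjH g h Hh)) -(L_eta h Hh) !LM.
Qed.

Lemma intertwiner_comm g h : H h -> comm_mx (Lam (inv g) *m Lam' g) (eta h).
Proof.
move=> Hh.
have E : Lam g *m eta h *m Lam (inv g) = Lam' g *m eta h *m Lam' (inv g).
  by rewrite (extension_conj g repLam Lam_eta Hh) (extension_conj g repLam' Lam'_eta Hh).
have etaV : eta h *m Lam (inv g) = Lam (inv g) *m (Lam' g *m eta h *m Lam' (inv g)).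
  by rewrite -E !mulmxA rep_invl // mul1mx.
by rewrite /comm_mx mulmxA etaV -!mulmxA rep_invl // mulmx1.
Qed.

Lemma twist_character (chi : T -> A) :
  (0 < n)%N -> smooth_on one setT Lam -> smooth_on one setT Lam' ->
  (forall g, Lam' g = chi g *: Lam g) -> is_character_mod mul one H chi.
Proof.
move=> n_gt0 [U [oU Uone LamU]] [U' [oU' U'one Lam'U']] Lam'E.
have [[L1 LM] [L'1 L'M]] := (repLam, repLam').
have chi_eq g c : c *: Lam g = Lam' g -> chi g = c.
  rewrite Lam'E => E; apply: (scalemx_rinv_inj n_gt0 (rep_invr g repLam)).
  by rewrite E.
have chi1 : chi one = 1 by apply: chi_eq; rewrite L1 L'1 scale1r.
have chiM g g' : chi (mul g g') = chi g * chi g'.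
  apply: chi_eq; rewrite L'M // LM // !Lam'E.
  by rewrite -scalemxAl -scalemxAr scalerA.
split=> //.
- move=> g; apply/unitrPr; exists (chi (inv g)).
  by case: groupT => _ _ invT; rewrite -chiM (invT g).2.
- by move=> h Hh; apply: chi_eq; rewrite Lam_eta // Lam'_eta // scale1r.
- exists (U `&` U'); split; [exact: openI | by [] |].
  move=> h _ [Uh U'h]; rewrite chi1; apply: chi_eq.
  by rewrite LamU // Lam'U' // L1 L'1 scale1r.
Qed.

End Extensions.

Theorem mainTheorem8
  (J : topologicalType) (mul : J -> J -> J) (inv : J -> J) (one : J)
  (J1 : set J)
  (l : nat) (k : closedFieldType) (A : comUnitRingType) (pi : {rmorphism A -> k})
  (n : nat) (eta Lam Lam' : J -> 'M[A]_n) :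
  locally_profinite_group mul inv one ->
  is_normal_subgroup mul inv one J1 -> compact J1 ->
  is_algebraic_closure_of_Fp k l ->
  local_with_residue pi -> finite_length A ->
  is_rep_on mul one J1 eta -> smooth_on one J1 eta ->
  irreducible_on J1 (fun h => map_mx pi (eta h)) ->
  is_rep_on mul one setT Lam -> smooth_on one setT Lam ->
  (forall h, J1 h -> Lam h = eta h) ->
  is_rep_on mul one setT Lam' -> smooth_on one setT Lam' ->
  (forall h, J1 h -> Lam' h = eta h) ->
  exists chi : J -> A,
    is_character_mod mul one J1 chi /\
    exists P : 'M[A]_n, P \in unitmx /\
      forall g, Lam' g *m P = P *m (chi g *: Lam g).
Proof.
move=> [groupJ _ _ _ _] normalJ1 _ _ localA lengthA _ _ irr
  repLam smoothLam Lam_eta repLam' smoothLam' Lam'_eta.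
have residue_scalar (C : 'M[k]_n) :
    (forall s, (eta @` J1) s -> comm_mx C (map_mx pi s)) -> exists lam, C = lam%:M.
  move=> cC; apply: (irreducible_commutant_scalar irr) => h J1h.
  by apply: cC; exists h.
have intertwiner_scalar g : exists a, Lam (inv g) *m Lam' g = a%:M.
  apply: (commutant_lift_scalar localA lengthA residue_scalar).
  by move=> _ [h J1h <-]; exact: (intertwiner_comm groupJ normalJ1 repLam repLam').
have [chi chiE] := choice intertwiner_scalar.
have Lam'E g : Lam' g = chi g *: Lam g.
  rewrite -[Lam' g]mul1mx -(rep_invr groupJ g repLam) -mulmxA chiE.
  by rewrite mul_mx_scalar.
exists chi; split.
  exact: (twist_character groupJ repLam repLam' Lam_eta Lam'_eta irr.1 smoothLam smoothLam').
by exists 1%:M; split=> [|g]; rewrite ?unitmx1 // mulmx1 mul1mx Lam'E.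
Qed.
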